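(* Let $P_1$ and $P_2$ be finite semipure posets of the same length, and assume $P_2$ has a minimum element $\hat 0_2$. Let $\lambda_1:\mathrm{Cov}(\hat P_1)\to L_1$ be an EL-labeling of $\hat P_1$, whose adjoined minimum and maximum are denoted $\hat 0_1,\hat 1_1$, and let $\lambda_2:\mathrm{Cov}(P_2)\to L_2$ be a semi-EL-labeling of $P_2$. Let $L_2\uplus\{\hat 0_{L_2}\}$ be the poset $L_2$ with a new minimum element $\hat 0_{L_2}$ adjoined, and give $L_1\times(L_2\uplus\{\hat 0_{L_2}\})$ the componentwise (product) order. Denote the minimum of $\widehat{P_1*P_2}$ by $(\hat 0_1,\hat 0_2)$ and its maximum by $\hat 1$. Define $\lambda:\mathrm{Cov}(\widehat{P_1*P_2})\to L_1\times(L_2\uplus\{\hat 0_{L_2}\})$ as follows: for a cover $(x,k)\lessdot(y,l)$ with $(y,l)\neq\hat 1$ (where $(x,k)$ may be the minimum $(\hat 0_1,\hat 0_2)$), $$\lambda((x,k),(y,l))=\begin{cases}(\lambda_1(x,y),\lambda_2(k,l)) & \text{if } k<_{P_2} l,\\ (\lambda_1(x,y),\hat 0_{L_2}) & \text{if } k=l,\end{cases}$$ and for a cover $(x,k)\lessdot\hat 1$, $\lambda((x,k),\hat 1)=(\lambda_1(x,\hat 1_1),\hat 0_{L_2})$. Then $\lambda$ is an EL-labeling of $\widehat{P_1*P_2}$.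
   Context: All posets are finite. A poset $P$ is semipure if for every $x\in P$ all maximal chains of $P_{\le x}=\{y\in P:y\le x\}$ have the same length; this length is the rank $r_P(x)$. For semipure $P,Q$, the Rees product $P*Q$ is the set $\{(p,q)\in P\times Q: r_P(p)\ge r_Q(q)\}$ ordered by $(p_1,q_1)\le(p_2,q_2)$ iff $p_1\le_P p_2$, $q_1\le_Q q_2$ and $r_P(p_2)-r_P(p_1)\ge r_Q(q_2)-r_Q(q_1)$; equivalently $(p_2,q_2)$ covers $(p_1,q_1)$ iff $p_2$ covers $p_1$ in $P$ and either $q_2=q_1$ or $q_2$ covers $q_1$ in $Q$. For any poset $P$, $\hat P$ denotes $P$ with a new minimum $\hat 0$ and a new maximum $\hat 1$ adjoined (even if $P$ already has such elements). $\mathrm{Cov}(P)$ is the set of pairs $(x,y)$ with $y$ covering $x$. For a poset $L$, sequences over $L$ are compared lexicographically: $(a_1,\dots,a_m)\prec(b_1,\dots,b_m)$ if at the first index $i$ with $a_i\ne b_i$ we have $a_i<b_i$. An edge labeling of a bounded poset $P$ is a map $\lambda:\mathrm{Cov}(P)\to L$; the label sequence of a saturated chain $x_1<\dots<x_m$ is $(\lambda(x_1,x_2),\dots,\lambda(x_{m-1},x_m))$, and the chain is weakly increasing if $\lambda(x_i,x_{i+1})\le\lambda(x_{i+1},x_{i+2})$ for all $i$. $\lambda$ is an EL-labeling if for every $x<y$ in $P$ there is a unique weakly increasing maximal chain $C$ of $[x,y]$ and its label sequence lexicographically precedes ($\prec$) the label sequence of every other maximal chain of $[x,y]$. If $P$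 has a minimum $\hat 0$, an edge labeling of $P$ is a semi-EL-labeling if its restriction to $[\hat 0,m]$ is an EL-labeling for every maximal element $m$ of $P$. *)

From HB Require Import structures.
From mathcomp Require Import all_boot all_order.
Set Implicit Arguments. Unset Strict Implicit. Unset Printing Implicit Defensive.
Import Order.Theory.

Section Generic.
Variables (T : finType) (le : rel T).

Definition ltr (x y : T) : bool := (x != y) && le x y.

Definition covers (x y : T) : bool :=
  ltr x y && [forall z, ~~ (ltr x z && ltr z y)].

Definition is_chain (C : {set T}) : bool :=
  [forall x in C, forall y in C, le x y || le y x].

Definition maxchain_in (A : {set T}) (C : {set T}) : Prop :=
  [/\ is_chain C, C \subset A &
      forall D : {set T}, is_chain D -> C \subset D -> D \subset A -> D = C].

Definition downset (x : T) : {set T} := [set y | le y x].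

Definition semipure : Prop :=
  forall x C D, maxchain_in (downset x) C -> maxchain_in (downset x) D ->
    #|C| = #|D|.

(* rank r(x): length of a (any, by semipurity) maximal chain of P_{<= x};
   we take the maximum cardinality of chains in P_{<= x}, minus one. *)
Definition rank (x : T) : nat :=
  (\max_(C : {set T} | is_chain C && (C \subset downset x)) #|C|).-1.

(* height = length + 1 (max cardinality of a chain; 0 for empty poset) *)
Definition height : nat := \max_(C : {set T} | is_chain C) #|C|.

Definition is_maximal (m : T) : bool := [forall z, ~~ ltr m z].

(* Saturated (= maximal, in a finite poset) chains of [x,y]:
   x :: s with consecutive covers and ending at y. *)
Definition satchain (x y : T) (s : seq T) : bool :=
  path covers x s && (last x s == y).

Variables (Lab : Type) (lle : rel Lab) (lab : T -> T -> Lab).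

Definition labseq (x : T) (s : seq T) : seq Lab := pairmap lab x s.

Fixpoint lexlt (a b : seq Lab) : Prop :=
  match a, b with
  | u :: a', v :: b' => (u = v /\ lexlt a' b') \/ (u <> v /\ lle u v)
  | _, _ => False
  end.

Definition EL_at (x y : T) : Prop :=
  exists s, [/\ satchain x y s, sorted lle (labseq x s),
     (forall s', satchain x y s' -> sorted lle (labseq x s') -> s' = s) &
     (forall s', satchain x y s' -> s' <> s -> lexlt (labseq x s) (labseq x s'))].

Definition EL_labeling : Prop := forall x y, ltr x y -> EL_at x y.

(* semi-EL (P has a minimum z): restriction to [z, m] is an EL-labeling for
   every maximal m; intervals [x,y] of [z,m] are the intervals of P with
   y <= m, and their maximal chains/covers are those of P. *)
Definition semiEL_labeling : Prop :=
  forall m, is_maximal m -> forall x y, ltr x y -> le y m -> EL_at x y.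
End Generic.

(* hat P : None = adjoined minimum, Some None = adjoined maximum,
   Some (Some x) = x. *)
Definition hat (T : finType) : finType := option (option T).
Definition hbot {T : finType} : hat T := None.
Definition htop {T : finType} : hat T := Some None.
Definition hin {T : finType} (x : T) : hat T := Some (Some x).

Definition hat_le (T : finType) (le : rel T) : rel (hat T) :=
  fun a b => match a, b with
  | None, _ => true
  | _, Some None => true
  | Some (Some x), Some (Some y) => le x y
  | _, _ => false
  end.

Definition rees_pred d1 d2 (P1 : finPOrderType d1) (P2 : finPOrderType d2)
  (pq : P1 * P2) : bool :=
  rank (<=%O : rel P2) pq.2 <= rank (<=%O : rel P1) pq.1.

Definition rees d1 d2 (P1 : finPOrderType d1) (P2 : finPOrderType d2) : finType :=
  {pq : P1 * P2 | rees_pred pq}.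

(* (p1,q1) <= (p2,q2) iff p1 <= p2, q1 <= q2 and r(p2)-r(p1) >= r(q2)-r(q1)
   (written without truncated subtraction) *)
Definition rees_le d1 d2 (P1 : finPOrderType d1) (P2 : finPOrderType d2) :
  rel (rees P1 P2) :=
  fun a b =>
    [&& ((val a).1 <= (val b).1)%O, ((val a).2 <= (val b).2)%O &
        rank (<=%O : rel P2) (val b).2 + rank (<=%O : rel P1) (val a).1 <=
        rank (<=%O : rel P1) (val b).1 + rank (<=%O : rel P2) (val a).2].

(* L2 with a new minimum adjoined: None is \hat 0_{L2} *)
Definition opt_le d (L : porderType d) : rel (option L) :=
  fun a b => match a, b with
  | None, _ => true
  | Some _, None => false
  | Some x, Some y => (x <= y)%O
  end.

Definition prod_lab_le d1 d2 (L1 : porderType d1) (L2 : porderType d2) :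
  rel (L1 * option L2) :=
  fun a b => (a.1 <= b.1)%O && opt_le a.2 b.2.

(* coordinates of a non-top element of hat(P1*P2): the minimum is (0_1, 0_2) *)
Definition rees_coord d1 d2 (P1 : finPOrderType d1) (P2 : finPOrderType d2)
  (z2 : P2) (a : hat (rees P1 P2)) : hat P1 * P2 :=
  match a with
  | Some (Some pq) => (hin (val pq).1, (val pq).2)
  | _ => (hbot, z2)
  end.

Definition rees_label d1 d2 e1 e2 (P1 : finPOrderType d1) (P2 : finPOrderType d2)
  (L1 : porderType e1) (L2 : porderType e2) (z2 : P2)
  (lam1 : hat P1 -> hat P1 -> L1) (lam2 : P2 -> P2 -> L2)
  (a b : hat (rees P1 P2)) : L1 * option L2 :=
  let (x, k) := rees_coord z2 a in
  match b with
  | Some None => (lam1 x htop, None)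
  | _ => let (y, l) := rees_coord z2 b in
         (lam1 x y, if (k < l)%O then Some (lam2 k l) else None)
  end.

From HB Require Import structures.
From mathcomp Require Import all_boot all_order.
From mathcomp Require Import zify.
Import Order.Theory.
Set Implicit Arguments. Unset Strict Implicit. Unset Printing Implicit Defensive.

(* Write Q for the bounded poset hat (P1 * P2).  Every element of Q below its
   top has coordinates (x, k) in hat P1 * P2, the bottom having coordinates
   (0_1, z2).  The argument has three ingredients.
   1. In a semipure poset the rank goes up by exactly one along every cover
      ([rank_cover]).  Hence the covers of P1 * P2 are the pairs
      (x, k) <. (y, l) with x <. y and k = l or k <. l ([rees_cover]): a
      saturated chain of Q projects to a saturated chain of hat P1 and, once
      repetitions are removed, to a saturated chain of P2 ([snd_chain_path]);
      the chain is recovered from these projections and from the positions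
      where its second coordinate moves ([chain_reconstruction]).
   2. The label sequence of such a chain zips the lambda1-labels of its first
      projection with a sequence of optional lambda2-labels, None exactly
      where the second coordinate stays put.  For the product order, a zip is
      weakly increasing iff both components are ([sorted_zip]) and
      lexicographically smaller as soon as its components are ([lex_zip]).
   3. So the weakly increasing chains of an interval [a, b] of Q are those
      whose first projection is the increasing lambda1-chain c1 and whose
      second coordinate stays fixed during the first |c1| - |C| steps and then
      follows the increasing lambda2-chain C of [k, l], where k and l are the
      second coordinates of a and b; [k, l] lies in some [0_2, m] with m
      maximal ([semiEL_chain]).  Such a chain exists and is
      unique, and by 2 it is lexicographically first ([increasing_exists_top],
      [increasing_exists_below], [increasing_unique], [increasing_lexfirst]).
   The hypothesis on the heights is only used to know that P1 is nonempty. *)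

(* [lia] on the arithmetic hypotheses only: the contexts below contain many
   order-theoretic facts that zify would otherwise have to process. *)
Ltac nat_lia := repeat match goal with
 | H : ?T |- _ => lazymatch T with
    | is_true (leq _ _) => fail
    | @eq nat _ _ => fail
    | _ => clear H end end; lia.

Section HatCovers.
Variables (X : finType) (le : rel X).
Local Notation hle := (hat_le le).

Lemma ltr_hin x y : ltr hle (hin x) (hin y) = ltr le x y.
Proof. by []. Qed.

Lemma covers_hin x y : covers hle (hin x) (hin y) = covers le x y.
Proof.
rewrite /covers ltr_hin; congr (_ && _); apply/forallP/forallP => H z.
  by have := H (hin z); rewrite !ltr_hin.
by case: z => [[z|]|] //=; rewrite !ltr_hin H.
Qed.

Lemma covers_bot_hin y : covers hle hbot (hin y) = [forall w, ~~ ltr le w y].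
Proof.
rewrite /covers /=; apply/forallP/forallP => H z.
  by have := H (hin z); rewrite ltr_hin.
by case: z => [[z|]|] //=; rewrite ltr_hin H.
Qed.

Lemma covers_hin_top x : covers hle (hin x) htop = [forall w, ~~ ltr le x w].
Proof.
rewrite /covers /=; apply/forallP/forallP => H z.
  by have := H (hin z); rewrite ltr_hin andbT.
by case: z => [[z|]|] //=; rewrite ltr_hin /ltr /= !andbT ?H // andbF.
Qed.

Lemma covers_bot_top : covers hle hbot htop = [forall w : X, false].
Proof.
rewrite /covers /=; apply/forallP/forallP => H z.
  by have := H (hin z).
by case: z => [[z|]|] //=; have := H z.
Qed.

Lemma covers_to_bot u : covers hle u hbot = false.
Proof. by case: u => [[u|]|]; rewrite /covers /ltr. Qed.

Lemma covers_from_top u : covers hle htop u = false.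
Proof. by case: u => [[u|]|]; rewrite /covers /ltr. Qed.

Lemma path_from_top s : path (covers hle) htop s -> s = [::].
Proof. by case: s => //= x s; rewrite covers_from_top. Qed.

Lemma path_notop (x : hat X) s :
  path (covers hle) x s -> last x s != htop -> htop \notin x :: s.
Proof.
elim: s x => [|y s IH] x /=; first by move=> _ H; rewrite inE eq_sym.
move=> /andP[c p] l; rewrite inE negb_or IH // andbT.
by apply/eqP => E; move: c; rewrite -E covers_from_top.
Qed.

Lemma path_nobot (x : hat X) s : path (covers hle) x s -> hbot \notin s.
Proof.
elim: s x => [|y s IH] x //= /andP[c p]; rewrite inE negb_or (IH y) // andbT.
by apply/eqP => E; move: c; rewrite -E covers_to_bot.
Qed.

End HatCovers.

Section Rank.
Variables (d : Order.disp_t) (P : finPOrderType d).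
Local Notation le := (<=%O : rel P).
Local Notation rk := (rank le).

Lemma ltrE (x y : P) : ltr le x y = (x < y)%O.
Proof. by rewrite /ltr lt_def eq_sym. Qed.

Lemma coversP (x y : P) :
  covers le x y <-> (x < y)%O /\ forall z, ~~ ((x < z) && (z < y))%O.
Proof.
rewrite /covers ltrE; split => [/andP[-> /forallP H]|[-> H]].
  by split => // z; have := H z; rewrite !ltrE.
by apply/forallP => z; rewrite !ltrE.
Qed.

Definition chains_below (x : P) :=
  [pred C : {set P} | is_chain le C && (C \subset downset le x)].
Definition height_below (x : P) := \max_(C in chains_below x) #|C|.

Lemma rankE x : rk x = (height_below x).-1.
Proof. by []. Qed.

Lemma chain_sub (C D : {set P}) : is_chain le D -> C \subset D -> is_chain le C.
Proof.
move=> /forallP HD /subsetP CD; apply/forallP => a; apply/implyP => aC.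
apply/forallP => b; apply/implyP => bC.
by have := HD a; move/implyP/(_ (CD _ aC))/forallP/(_ b)/implyP/(_ (CD _ bC)).
Qed.

Lemma set1_chains_below (x : P) : [set x] \in chains_below x.
Proof.
rewrite inE; apply/andP; split.
  by apply/forallP => a; apply/implyP; rewrite inE => /eqP->; apply/forallP => b;
     apply/implyP; rewrite inE => /eqP->; rewrite lexx.
by apply/subsetP => a; rewrite !inE => /eqP->.
Qed.

Lemma height_below_max x :
  {C | C \in chains_below x & height_below x = #|C| }.
Proof.
have : 0 < #|chains_below x| by apply/card_gt0P; exists [set x];
  apply: set1_chains_below.
by move/(eq_bigmax_cond (fun C : {set P} => #|C|)) => [C HC E]; exists C.
Qed.

Lemma height_below_ge C x : C \in chains_below x -> #|C| <= height_below x.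
Proof. by move=> H; apply: (leq_bigmax_cond (P := mem (chains_below x))). Qed.

Lemma height_below_gt0 x : 0 < height_below x.
Proof. by have := height_below_ge (set1_chains_below x); rewrite cards1. Qed.

Lemma in_chains_below C x :
  (C \in chains_below x) = is_chain le C && (C \subset downset le x).
Proof. by rewrite inE. Qed.

Lemma chainU1 (C : {set P}) y : is_chain le C ->
  (forall c, c \in C -> (c <= y)%O) -> is_chain le (y |: C).
Proof.
move=> /forallP HC Hy; apply/forallP => a; apply/implyP;
  rewrite in_setU1 => /orP[/eqP->|aC];
  apply/forallP => b; apply/implyP; rewrite in_setU1 => /orP[/eqP->|bC].
- by rewrite lexx.
- by rewrite Hy ?orbT.
- by rewrite Hy.
by have := HC a; move/implyP/(_ aC)/forallP/(_ b)/implyP/(_ bC).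
Qed.

Lemma height_below_lt (x y : P) : (x < y)%O -> height_below x < height_below y.
Proof.
move=> xy; have [C HC ->] := height_below_max x.
move: HC; rewrite in_chains_below => /andP[ch sub].
have Cx c : c \in C -> (c <= x)%O by move/(subsetP sub); rewrite inE.
have yC : y \notin C.
  by apply/negP => /Cx yx; have := lt_le_trans xy yx; rewrite ltxx.
have : y |: C \in chains_below y.
  rewrite in_chains_below chainU1 //=; last first.
    by move=> c /Cx /le_lt_trans/(_ xy)/ltW.
  apply/subsetP => c; rewrite !inE => /orP[/eqP->|/Cx cx]; first by rewrite lexx.
  exact: (le_trans cx (ltW xy)).
by move/height_below_ge; rewrite cardsU1 yC.
Qed.

Lemma rank_lt (x y : P) : (x < y)%O -> rk x < rk y.
Proof. by move=> /height_below_lt; rewrite !rankE; have := height_below_gt0 x; lia. Qed.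

Lemma rank_le (x y : P) : (x <= y)%O -> rk x <= rk y.
Proof. by rewrite le_eqVlt => /orP[/eqP->//|/rank_lt/ltnW]. Qed.

Lemma rank_min (x : P) : (forall w, ~~ (w < x)%O) -> rk x = 0.
Proof.
move=> H; rewrite rankE.
suff : height_below x <= 1 by lia.
apply/bigmax_leqP => C; rewrite in_chains_below => /andP[_ /subsetP sub].
rewrite -(cards1 x); apply: subset_leq_card; apply/subsetP => c /sub.
by rewrite !inE le_eqVlt => /orP[//|cx]; have := H c; rewrite cx.
Qed.

Lemma le_rank_eq (x y : P) : (x <= y)%O -> rk y <= rk x -> x = y.
Proof. by rewrite le_eqVlt => /orP[/eqP->//|/rank_lt]; lia. Qed.

Lemma rank_le_card (x : P) : rk x <= #|P|.
Proof.
rewrite rankE; have [C _ ->] := height_below_max x.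
exact: leq_trans (leq_pred _) (max_card _).
Qed.

Lemma not_cover (x y : P) : (x < y)%O -> ~~ covers le x y ->
  exists w, (x < w)%O /\ (w < y)%O.
Proof.
move=> xy; rewrite /covers ltrE xy /= => /forallPn [w].
by rewrite negbK !ltrE => /andP[a b]; exists w.
Qed.

Lemma cover_above (x y : P) : (x < y)%O -> exists z, covers le x z /\ (z <= y)%O.
Proof.
move: {2}(rk y - rk x) (leqnn (rk y - rk x)) => n.
elim: n y => [|n IH] y Hn xy; first by have := rank_lt xy; lia.
case C: (covers le x y); first by exists y.
have [w [xw wy]] := not_cover xy (negbT C).
have [|z [cz zw]] := IH w _ xw; first by have := rank_lt wy; lia.
by exists z; split => //; apply: le_trans zw (ltW wy).
Qed.

Lemma cover_below (x y : P) : (x < y)%O -> exists z, covers le z y /\ (x <= z)%O.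
Proof.
move: {2}(rk y - rk x) (leqnn (rk y - rk x)) => n.
elim: n x => [|n IH] x Hn xy; first by have := rank_lt xy; lia.
case C: (covers le x y); first by exists x.
have [w [xw wy]] := not_cover xy (negbT C).
have [|z [cz zw]] := IH w _ wy; first by have := rank_lt xw; lia.
by exists z; split => //; apply: le_trans (ltW xw) zw.
Qed.

Lemma max_above (l : P) : exists m, is_maximal le m /\ (l <= m)%O.
Proof.
move: {2}(#|P| - rk l) (leqnn (#|P| - rk l)) => n.
elim: n l => [|n IH] l Hn.
  exists l; split => //; apply/forallP => z; apply/negP; rewrite ltrE => /rank_lt.
  by have := rank_le_card z; lia.
case M: (is_maximal le l); first by exists l.
move/negbT: M => /forallPn [w]; rewrite negbK ltrE => lw.
have [|m [Hm wm]] := IH w.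
  by have := rank_lt lw; have := rank_le_card w; lia.
by exists m; split => //; apply: le_trans (ltW lw) wm.
Qed.

Lemma height_gt0 (x : P) : 0 < height le.
Proof.
have := set1_chains_below x; rewrite in_chains_below => /andP[ch _].
by apply: leq_trans (leq_bigmax_cond _ ch); rewrite cards1.
Qed.

Lemma height_nonempty : 0 < height le -> exists x : P, true.
Proof.
case: (pickP (@predT P)) => [x _|H]; first by exists x.
rewrite lt0n => /eqP []; apply/eqP; rewrite -leqn0; apply/bigmax_leqP => C _.
by rewrite leqn0; apply/eqP; apply: eq_card0 => x; have := H x.
Qed.

Lemma maxchain_of_max x C : C \in chains_below x -> height_below x = #|C| ->
  maxchain_in le (downset le x) C.
Proof.
rewrite in_chains_below => /andP[ch sub] E; split => // D chD CD Dsub.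
apply/eqP; rewrite eq_sym eqEcard CD /= -E; apply: height_below_ge.
by rewrite in_chains_below chD.
Qed.

Lemma largest_chain_mem x C : C \in chains_below x -> height_below x = #|C| ->
  x \in C.
Proof.
move=> HC E; apply/negPn/negP => xC; move: (HC); rewrite in_chains_below.
move=> /andP[ch sub]; have : x |: C \in chains_below x.
  rewrite in_chains_below chainU1 //= ?subUset ?sub ?sub1set ?inE ?lexx //.
  by move=> c /(subsetP sub); rewrite inE.
by move/height_below_ge; rewrite cardsU1 xC E; lia.
Qed.

Lemma maxchain_cover x y C : covers le x y ->
  maxchain_in le (downset le x) C -> x \in C ->
  maxchain_in le (downset le y) (y |: C).
Proof.
move=> /coversP[xy nb] mC xC; have [ch sub _] := mC.
have Cx c : c \in C -> (c <= x)%O by move/(subsetP sub); rewrite inE.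
split.
- by apply: chainU1 => // c /Cx /le_lt_trans/(_ xy)/ltW.
- apply/subsetP => c; rewrite !inE => /orP[/eqP->|/Cx cx]; first by rewrite lexx.
  exact: (le_trans cx (ltW xy)).
move=> D chD CD Dsub; apply/eqP; rewrite eqEsubset CD andbT.
have Heq : D :&: downset le x = C.
  case: mC => _ _ /(_ (D :&: downset le x)); apply.
  - by apply: chain_sub chD _; apply: subsetIl.
  - by rewrite subsetI sub andbT; apply: subset_trans CD; apply: subsetUr.
  - exact: subsetIr.
apply/subsetP => c cD; rewrite in_setU1.
have cy : (c <= y)%O by have := subsetP Dsub c cD; rewrite inE.
have [->|cny] := eqVneq c y; first by [].
have xD : x \in D by apply: (subsetP CD); rewrite inE xC orbT.
have := (forallP chD) c; move/implyP/(_ cD)/forallP/(_ x)/implyP/(_ xD).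
case/orP => [cx|xc]; first by rewrite -Heq !inE cD /=.
have /eqP-> // : c == x.
apply/negPn/negP => cnx; have := nb c.
by rewrite !lt_def cnx xc cy /= eq_sym cny.
Qed.

Hypothesis sp : semipure le.

(* Semipurity compares the extension of a largest chain of P_{<= x} with a
   largest chain of P_{<= y}. *)
Lemma rank_cover (x y : P) : covers le x y -> rk y = (rk x).+1.
Proof.
move=> cxy; have [xy _] := (coversP _ _).1 cxy.
have [C HC E] := height_below_max x.
have [Cy HCy Ey] := height_below_max y.
have yC : y \notin C.
  move: HC; rewrite in_chains_below => /andP[_ /subsetP sub].
  apply/negP => /sub; rewrite inE => yx.
  by have := lt_le_trans xy yx; rewrite ltxx.
have := sp (maxchain_cover cxy (maxchain_of_max HC E) (largest_chain_mem HC E))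
           (maxchain_of_max HCy Ey).
rewrite cardsU1 yC -Ey -E rankE rankE.
by have := height_below_gt0 x; lia.
Qed.

Lemma rank_path (x : P) s : path (covers le) x s -> rk (last x s) = rk x + size s.
Proof.
elim: s x => [|y s IH] x /=; first by rewrite addn0.
by move=> /andP[/rank_cover E /IH ->]; rewrite E addnS addSn.
Qed.

End Rank.

Section SemiELChain.
Variables (d e : Order.disp_t) (P : finPOrderType d) (L : porderType e)
  (lam : P -> P -> L).
Hypotheses (sp : semipure (<=%O : rel P))
  (EL : semiEL_labeling (<=%O : rel P) (<=%O : rel L) lam).

Lemma semiEL_chain (k l : P) : (k <= l)%O ->
  exists C, [/\ satchain <=%O k l C, sorted <=%O (labseq lam k C) &
    forall t, satchain <=%O k l t ->
      (sorted <=%O (labseq lam k t) -> t = C) /\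
      (t = C \/ lexlt <=%O (labseq lam k C) (labseq lam k t))].
Proof.
rewrite le_eqVlt => /orP[/eqP <-|kl].
  exists [::]; split => [|//|t /andP[pt /eqP lt]]; first by rewrite /satchain /=.
  suff -> : t = [::] by split => //; left.
  by have := rank_path sp pt; rewrite lt; case: t {pt lt} => //= ? ?; lia.
have [m [Hm lm]] := max_above l.
have kl' : ltr <=%O k l by rewrite ltrE.
have [C [sC soC unC lxC]] := EL Hm kl' lm.
exists C; split => // t st; split => [|]; first exact: unC.
have [->|ne] := eqVneq t C; first by left.
by right; apply: lxC => //; apply/eqP.
Qed.

End SemiELChain.

Section ZipLabels.
Variables (A B : eqType) (ra : rel A) (rb : rel B).

Definition prodrel : rel (A * B) := fun p q => ra p.1 q.1 && rb p.2 q.2.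

Lemma path_zip (a : seq A) (b : seq B) x y : size a = size b ->
  path prodrel (x, y) (zip a b) = path ra x a && path rb y b.
Proof.
elim: a b x y => [|x' a IH] [|y' b] x y //= [E].
by rewrite IH // /prodrel /= -!andbA; congr (_ && _); rewrite andbCA.
Qed.

Lemma sorted_zip (a : seq A) (b : seq B) : size a = size b ->
  sorted prodrel (zip a b) = sorted ra a && sorted rb b.
Proof. by case: a b => [|x a] [|y b] //= [E]; rewrite path_zip. Qed.

(* [s] is lexicographically at most [t] when compared on their common length
   only: this is what the second components of two label sequences need to
   satisfy for the zips to compare, as the first components decide lengths. *)
Fixpoint lexle_common (T : Type) (r : rel T) (s t : seq T) : Prop :=
  match s, t with
  | u :: s', v :: t' => (u = v /\ lexle_common r s' t') \/ (u <> v /\ r u v)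
  | _, _ => True
  end.

Lemma lexle_common_of (T : Type) (r : rel T) (s t : seq T) :
  s = t \/ lexlt r s t -> lexle_common r s t.
Proof.
elim: s t => [|u s IH] [|v t] //= [[<- <-]|[[<- H]|H]]; [|left|by right].
  by left; split => //; apply: IH; left.
by split => //; apply: IH; right.
Qed.

Hypotheses (ra_refl : reflexive ra) (rb_refl : reflexive rb).

Lemma lex_zip (a a' : seq A) (b b' : seq B) :
  size a = size b -> size a' = size b' ->
  a = a' \/ lexlt ra a a' -> lexle_common rb b b' ->
  zip a b = zip a' b' \/ lexlt prodrel (zip a b) (zip a' b').
Proof.
elim: a a' b b' => [|x a IH] a' b b'.
  by case: b => // _ _ [<-|//] _; case: b' => //; left.
case: b => // y b [Sa]; case: a' => [|x' a'] Sa' Ha; first by case: Ha.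
case: b' Sa' => // y' b' [Sa'] /= Hb.
have Hx : ra x x' /\ (x = x' -> a = a' \/ lexlt ra a a').
  case: Ha => [[<- <-]|/= [[<- H]|[Hne H]]] //.
  - by split => //; left.
  - by split => //; right.
have Hy : rb y y' /\ (y = y' -> lexle_common rb b b').
  by case: Hb => [[<- H]|[Hne H]].
have [[Ex Ey]|Hne] := eqVneq (x, y) (x', y').
  subst x' y'.
  have [E|L] := IH a' b b' Sa Sa' (Hx.2 erefl) (Hy.2 erefl).
    by left; rewrite /= E.
  by right; left.
by right; right; split; [apply/eqP | rewrite /prodrel /= Hx.1 Hy.1].
Qed.

End ZipLabels.

Section OptionLabels.
Variables (e : Order.disp_t) (L : porderType e).
Local Notation ole := (@opt_le _ L).

Lemma opt_le_refl : reflexive ole.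
Proof. by case => //= x; rewrite /opt_le lexx. Qed.

Lemma path_someP (x : L) (b : seq (option L)) : path ole (Some x) b ->
  exists g, b = map Some g.
Proof.
elim: b x => [|[y|] b IH] x /=; first by exists [::].
  by move=> /andP[_ /IH[g ->]]; exists (y :: g).
by rewrite /opt_le.
Qed.

Lemma sorted_optP (b : seq (option L)) : sorted ole b ->
  exists j g, b = nseq j None ++ map Some g.
Proof.
elim: b => [|[y|] b IH] /=; first by exists 0, [::].
  by move=> /path_someP[g ->]; exists 0, (y :: g).
by move=> /path_sorted/IH[j [g ->]]; exists j.+1, g.
Qed.

Lemma sorted_nseq_some j (g : seq L) :
  sorted <=%O g -> sorted ole (nseq j None ++ map Some g).
Proof.
move=> sg; elim: j => [|j IH] /=; first by rewrite sorted_map.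
by move: IH; case: (nseq j None ++ _).
Qed.

Lemma pmap_nsome j (g : seq L) : pmap id (nseq j None ++ map Some g) = g.
Proof. by elim: j => [|j IH] //=; elim: g => //= y g ->. Qed.

Lemma lexle_nones j (t : seq (option L)) : lexle_common ole (nseq j None) t.
Proof. by elim: j t => [|j IH] [|[v|] t] //=; [right | left]. Qed.

Lemma lexlt_map_some (g g' : seq L) :
  lexlt <=%O g g' -> lexlt ole (map Some g) (map Some g').
Proof.
elim: g g' => [|u g IH] [|v g'] //= [[-> H]|[H uv]]; first by left; split; auto.
by right; split => // [[]].
Qed.

Lemma all_some (t : seq (option L)) :
  count isSome t = size t -> t = map Some (pmap id t).
Proof.
elim: t => [|[v|] t IH] //= E; first by rewrite -IH //; lia.
by have := count_size isSome t; lia.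
Qed.

Lemma lexle_sorted_opt j (g : seq L) (t : seq (option L)) :
  size (nseq j None ++ map Some g) = size t -> count isSome t = size g ->
  g = pmap id t \/ lexlt <=%O g (pmap id t) ->
  lexle_common ole (nseq j None ++ map Some g) t.
Proof.
elim: j t => [|j IH] t /=.
  rewrite size_map => St Ct Hg; apply: lexle_common_of.
  rewrite (all_some (etrans Ct St)).
  by case: Hg => [->|/lexlt_map_some]; [left|right].
case: t => [//|[v|] t] /= /succn_inj St Ct Hg; last by left; split; auto.
by right.
Qed.

End OptionLabels.

Section Rees.
Variables (d1 d2 : Order.disp_t) (P1 : finPOrderType d1) (P2 : finPOrderType d2).
Local Notation le1 := (<=%O : rel P1).
Local Notation le2 := (<=%O : rel P2).
Local Notation r1 := (rank le1).
Local Notation r2 := (rank le2).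
Hypotheses (sp1 : semipure le1) (sp2 : semipure le2).
Variable z2 : P2.
Hypothesis z2min : forall q, (z2 <= q)%O.
Local Notation R := (rees P1 P2).
Local Notation rle := (@rees_le _ _ P1 P2).

Lemma rank_z2 : r2 z2 = 0.
Proof.
apply: rank_min => w; apply/negP => wz.
by have := le_lt_trans (z2min w) wz; rewrite ltxx.
Qed.

Lemma reesP (u : R) : r2 (val u).2 <= r1 (val u).1.
Proof. exact: (valP u). Qed.

Definition mkR (p : P1) (q : P2) (H : r2 q <= r1 p) : R := exist _ (p, q) H.

Lemma rees_eq (u v : R) : (val u).1 = (val v).1 -> (val u).2 = (val v).2 -> u = v.
Proof.
move=> E1 E2; apply: val_inj.
by rewrite [val u]surjective_pairing [val v]surjective_pairing E1 E2.
Qed.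

Lemma rleE (u v : R) : rle u v =
  [&& ((val u).1 <= (val v).1)%O, ((val u).2 <= (val v).2)%O &
      r2 (val v).2 + r1 (val u).1 <= r1 (val v).1 + r2 (val u).2].
Proof. by []. Qed.

Lemma rle_fst_eq (u v : R) : rle u v -> (val u).1 = (val v).1 -> u = v.
Proof.
rewrite rleE => /and3P[_ le2 rk] E; apply: rees_eq => //.
by apply: le_rank_eq le2 _; rewrite E in rk; nat_lia.
Qed.

Lemma rltr_fst (u v : R) : ltr rle u v -> ((val u).1 < (val v).1)%O.
Proof.
move=> /andP[neq le]; rewrite lt_def; move: (le); rewrite rleE => /and3P[-> _ _].
rewrite andbT eq_sym; apply/eqP => E; move/eqP: neq; apply; exact: rle_fst_eq.
Qed.

Lemma cover_between (u v w : R) :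
  covers rle u v -> u != w -> rle u w -> rle w v -> w = v.
Proof.
move=> /andP[_ /forallP nb] uw l1 l2; have := nb w.
by rewrite /ltr uw l1 l2 /= andbT negbK => /eqP.
Qed.

(* A cover (p1, q1) <. (p2, q2) of P1 * P2 has p1 <. p2, and q1 = q2 or
   q1 <. q2: otherwise refining p1 < p2 (and q1 < q2) by a cover at the bottom
   gives an element strictly in between. *)
Lemma rees_cover_coords (u v : R) : covers rle u v ->
  covers le1 (val u).1 (val v).1 /\
  ((val u).2 = (val v).2 \/ covers le2 (val u).2 (val v).2).
Proof.
move: (reesP u); case: u => [[p1 q1] /= Hu]; case: v => [[p2 q2] /= Hv] Ru.
set u := exist _ (p1, q1) Hu; set v := exist _ (p2, q2) Hv => cuv.
have [lt _] := andP cuv; have p12 : (p1 < p2)%O := rltr_fst lt.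
move: (lt) => /andP[_]; rewrite rleE /= => /and3P[_ q12 rk].
have [p' [cp' p'2]] := cover_above p12.
have rp' := rank_cover sp1 cp'; have rp'2 := rank_le p'2.
have p1p' : (p1 < p')%O by case/coversP: cp'.
have [Eq|nq] := eqVneq q1 q2.
  subst q2; have Hw : r2 q1 <= r1 p' by nat_lia.
  have Hne : u != mkR Hw by apply/eqP => [[E]]; move: p1p'; rewrite E ltxx.
  have := cover_between cuv Hne; rewrite !rleE /= lexx (ltW p1p') p'2 /=.
  move=> Hb; have : mkR Hw = v by apply: Hb; nat_lia.
  by move/(congr1 val) => /= [E]; subst p'; split => //; left.
have q1q2 : (q1 < q2)%O by rewrite lt_neqAle nq.
have [q' [cq' q'2]] := cover_above q1q2.
have rq' := rank_cover sp2 cq'.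
have q1q' : (q1 <= q')%O by case/coversP: cq' => /ltW.
have Hw : r2 q' <= r1 p' by nat_lia.
have Hne : u != mkR Hw by apply/eqP => [[E]]; move: p1p'; rewrite E ltxx.
have := cover_between cuv Hne; rewrite !rleE /= (ltW p1p') p'2 q1q' q'2 /=.
move=> Hb; have : mkR Hw = v by apply: Hb; nat_lia.
by move/(congr1 val) => /= [E1 E2]; subst p' q'; split => //; right.
Qed.

(* Conversely such pairs are covers: an element in between has first
   coordinate p1 or p2, and then the rank condition pins down the second. *)
Lemma rees_cover_of_coords (u v : R) : covers le1 (val u).1 (val v).1 ->
  (val u).2 = (val v).2 \/ covers le2 (val u).2 (val v).2 -> covers rle u v.
Proof.
case: u => [[p1 q1] /= Hu]; case: v => [[p2 q2] /= Hv] cp Hq.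
have [p12 nbp] := (coversP _ _).1 cp.
have rp := rank_cover sp1 cp.
have q12 : (q1 <= q2)%O by case: Hq => [->|/coversP[/ltW]].
have [rq1 rq2] : r2 q2 <= (r2 q1).+1 /\ r2 q1 <= r2 q2.
  by case: Hq => [->|/(rank_cover sp2)->]; nat_lia.
apply/andP; split.
  apply/andP; split; first by apply/eqP => [[E _]]; move: p12; rewrite E ltxx.
  by rewrite rleE /= (ltW p12) q12 /=; nat_lia.
apply/forallP => z; apply/negP => /andP[/andP[uz lz] /andP[zv zl]].
move: lz zl; rewrite !rleE /= => /and3P[pz qz rz] /and3P[zp zq zr].
have [E1|n1] := eqVneq p1 (val z).1.
  rewrite -E1 in rz.
  have Eq : q1 = (val z).2 by apply: le_rank_eq qz _; nat_lia.
  by move/eqP: uz; apply; apply: rees_eq.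
have [E2|n2] := eqVneq (val z).1 p2.
  rewrite E2 in zr.
  have Eq : (val z).2 = q2 by apply: le_rank_eq zq _; nat_lia.
  by move/eqP: zv; apply; apply: rees_eq.
have := nbp (val z).1; rewrite !lt_def pz zp !andbT.
by rewrite eq_sym n1 eq_sym n2.
Qed.

Lemma rees_cover (u v : R) : covers rle u v <->
  covers le1 (val u).1 (val v).1 /\
  ((val u).2 = (val v).2 \/ covers le2 (val u).2 (val v).2).
Proof.
split; first exact: rees_cover_coords.
by case; apply: rees_cover_of_coords.
Qed.

Lemma rees_max (u : R) :
  [forall w, ~~ ltr rle u w] = [forall p, ~~ ltr le1 (val u).1 p].
Proof.
case: u => [[p0 q0] Hu]; set u := exist _ (p0, q0) Hu; rewrite /=.
have Ru : r2 q0 <= r1 p0 := Hu.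
apply/forallP/forallP => H p.
  apply/negP; rewrite ltrE => up.
  have rup := rank_lt up.
  have Hw : r2 q0 <= r1 p by nat_lia.
  have := H (mkR Hw); rewrite /ltr rleE /= (ltW up) lexx /=.
  have -> : u != mkR Hw by apply/eqP => /(congr1 val) [E]; move: up; rewrite E ltxx.
  by move=> /negP; apply => /=; nat_lia.
by apply/negP => /rltr_fst up; have := H (val p).1; rewrite ltrE up.
Qed.

Lemma rees_min (u : R) : [forall w, ~~ ltr rle w u] =
   [forall p, ~~ ltr le1 p (val u).1] && ((val u).2 == z2).
Proof.
case: u => [[p0 q0] Hu]; set u := exist _ (p0, q0) Hu; rewrite /=.
have Ru : r2 q0 <= r1 p0 := Hu.
apply/forallP/andP => [H|[/forallP H /eqP E2] w].
  have Hm : [forall p, ~~ ltr le1 p p0].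
    apply/forallP => p; apply/negP; rewrite ltrE => pu.
    have [p' [cp' pp']] := cover_below pu.
    have rp' := rank_cover sp1 cp'.
    have rpu := rank_lt pu.
    have [E|nq] := eqVneq q0 z2.
      have Hw : r2 z2 <= r1 p by rewrite rank_z2.
      have := H (mkR Hw); rewrite /ltr rleE /= (ltW pu) E lexx rank_z2 /=.
      have -> : mkR Hw != u.
        by apply/eqP => /(congr1 val) [E']; move: pu; rewrite E' ltxx.
      by move=> /negP; apply => /=; nat_lia.
    have zq : (z2 < q0)%O by rewrite lt_def nq z2min.
    have [q' [cq' _]] := cover_below zq.
    have rq' := rank_cover sp2 cq'.
    have Hw : r2 q' <= r1 p' by nat_lia.
    have := H (mkR Hw); rewrite /ltr rleE /=.
    have -> : mkR Hw != u.
      by apply/eqP => /(congr1 val) [E' _]; move: cp'; rewrite E' /covers /ltr eqxx.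
    rewrite (ltW (proj1 ((coversP _ _).1 cp'))) (ltW (proj1 ((coversP _ _).1 cq'))).
    by move=> /negP; apply => /=; nat_lia.
  split => //; apply/eqP.
  have r0 : r1 p0 = 0.
    by apply: rank_min => w; have := (forallP Hm) w; rewrite ltrE.
  by apply/esym/le_rank_eq => //; rewrite rank_z2; nat_lia.
apply/negP => /andP[wu lwu].
have [E|ne] := eqVneq (val w).1 p0; first by move/eqP: wu; apply; exact: rle_fst_eq.
by have := H (val w).1; rewrite /ltr ne; move: lwu; rewrite rleE => /and3P[-> _ _].
Qed.

End Rees.

Section ReesHat.
Variables (d1 d2 e1 e2 : Order.disp_t)
  (P1 : finPOrderType d1) (P2 : finPOrderType d2)
  (L1 : porderType e1) (L2 : porderType e2)
  (z2 : P2) (lam1 : hat P1 -> hat P1 -> L1) (lam2 : P2 -> P2 -> L2).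
Local Notation le1 := (<=%O : rel P1).
Local Notation le2 := (<=%O : rel P2).
Local Notation r1 := (rank le1).
Local Notation r2 := (rank le2).
Hypotheses (sp1 : semipure le1) (sp2 : semipure le2).
Hypothesis z2min : forall q, (z2 <= q)%O.
(* A point of P1: for empty P1 the bottom of Q would be covered by its top. *)
Variable p0 : P1.
Local Notation R := (rees P1 P2).
Local Notation rle := (@rees_le _ _ P1 P2).
Local Notation H1 := (hat P1).
Local Notation hle1 := (hat_le le1).
Local Notation Q := (hat R).
Local Notation qle := (hat_le rle).
Local Notation lab := (rees_label z2 lam1 lam2).
Local Notation covQ := (covers qle).
Local Notation cov1 := (covers hle1).
Local Notation cov2 := (covers le2).
Local Notation ple := (@prod_lab_le _ _ L1 L2).

(* The coordinates of an element of Q in hat P1 * P2 (the top of Q has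
   coordinates (1_1, z2)), and the inverse map. *)
Definition hfst (u : Q) : H1 :=
  match u with Some (Some w) => hin (val w).1 | Some None => htop | None => hbot end.
Definition hsnd (u : Q) : P2 :=
  match u with Some (Some w) => (val w).2 | _ => z2 end.
Definition hpair (x : H1) (q : P2) : Q :=
  match x with
  | Some (Some p) => if @insub _ _ R (p, q) is Some w then hin w else hbot
  | Some None => htop
  | None => hbot end.

Definition snd_lab (u v : Q) : option L2 :=
  if (hsnd u < hsnd v)%O then Some (lam2 (hsnd u) (hsnd v)) else None.

Lemma hpairK u : hpair (hfst u) (hsnd u) = u.
Proof. by case: u => [[w|]|] //=; rewrite -surjective_pairing valK. Qed.

Lemma lt_z2 q : (q < z2)%O = false.
Proof. exact: (le_gtF (z2min q)). Qed.

Lemma snd_lab_top u : snd_lab u htop = None.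
Proof. by rewrite /snd_lab /= lt_z2. Qed.

Lemma hfst_top u : (hfst u == htop) = (u == htop).
Proof. by case: u => [[w|]|]. Qed.

Lemma labE u v : u != htop -> lab u v = (lam1 (hfst u) (hfst v), snd_lab u v).
Proof.
case: u => [[w|]|] // _; case: v => [[w'|]|] //=;
  by rewrite /snd_lab /= ?lt_z2 ?ltxx.
Qed.

Lemma rees_nonempty : [forall w : R, false] = false.
Proof.
have H : r2 z2 <= r1 p0 by rewrite (rank_z2 z2min).
by apply/negP => /forallP/(_ (mkR H)).
Qed.

Lemma P1_nonempty : [forall w : P1, false] = false.
Proof. by apply/negP => /forallP/(_ p0). Qed.

Lemma coversQ u v : covQ u v <->
  cov1 (hfst u) (hfst v) /\ (v != htop -> hsnd u = hsnd v \/ cov2 (hsnd u) (hsnd v)).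
Proof.
split.
  case: u => [[w|]|]; case: v => [[w'|]|];
    rewrite ?covers_hin ?covers_bot_hin ?covers_hin_top ?covers_bot_top
            ?covers_to_bot ?covers_from_top ?rees_nonempty //=.
  - by move/(rees_cover sp1 sp2) => [? ?]; split.
  - by rewrite rees_max.
  - by rewrite (rees_min sp1 sp2 z2min) // => /andP[-> /eqP->]; split => // _; left.
case: u => [[w|]|]; case: v => [[w'|]|] [];
  rewrite ?covers_hin ?covers_bot_hin ?covers_hin_top ?covers_bot_top
          ?covers_to_bot ?covers_from_top ?P1_nonempty //=.
- by move=> c1 /(_ isT) c2; apply/(rees_cover sp1 sp2).
- by rewrite rees_max.
- rewrite (rees_min sp1 sp2 z2min) // => H /(_ isT) [E|c]; first by rewrite H -E eqxx.
  have := rank_cover sp2 c; rewrite (rank_z2 z2min).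
  have : r1 (val w').1 = 0.
    by apply: rank_min => x; have := (forallP H) x; rewrite ltrE.
  by have := reesP w'; rewrite /=; nat_lia.
Qed.

Definition hrank (x : H1) : nat := if x is Some (Some p) then (r1 p).+1 else 0.

Lemma hrank_cover x y : cov1 x y -> y != htop -> hrank y = (hrank x).+1.
Proof.
case: x => [[p|]|]; case: y => [[q|]|] //=;
  rewrite ?covers_hin ?covers_bot_hin ?covers_to_bot ?covers_from_top //.
- by move=> /(rank_cover sp1) ->.
- move=> H _; congr S; apply: rank_min => w.
  by have := (forallP H) w; rewrite ltrE.
Qed.

Lemma hrank_path x s :
  path cov1 x s -> last x s != htop -> hrank (last x s) = hrank x + size s.
Proof.
elim: s x => [|y s IH] x /=; first by rewrite addn0.
move=> /andP[c p] l; rewrite IH //.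
have yt : y != htop by apply/eqP => E; move: p l; rewrite E => /path_from_top->.
by rewrite (hrank_cover c yt) addSnnS.
Qed.

Lemma hfst_path a s : path covQ a s -> path cov1 (hfst a) (map hfst s).
Proof.
by elim: s a => [|v s IH] a //= /andP[/coversQ[c _] p]; rewrite c IH.
Qed.

Lemma labseqE a s : path covQ a s ->
  labseq lab a s = zip (labseq lam1 (hfst a) (map hfst s)) (pairmap snd_lab a s).
Proof.
elim: s a => [|v s IH] a //= /andP[c p].
have at' : a != htop by apply/eqP => E; move: c; rewrite E covers_from_top.
by rewrite /labseq /= labE // -/(labseq _ _ _) IH.
Qed.

Lemma ltrQ_hfst a b : ltr qle a b -> ltr hle1 (hfst a) (hfst b).
Proof.
case: a => [[w|]|]; case: b => [[w'|]|] //=; rewrite ?ltr_hin //.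
by move/rltr_fst; rewrite ltrE.
Qed.

Lemma leQ_hsnd a b : qle a b -> b != htop -> (hsnd a <= hsnd b)%O.
Proof.
by case: a => [[w|]|]; case: b => [[w'|]|] //=; rewrite ?z2min // rleE => /and3P[].
Qed.

(* The rank inequality defining the order of the Rees product, extended to
   Q below its top. *)
Lemma leQ_rank a b : qle a b -> b != htop ->
  r2 (hsnd b) + hrank (hfst a) <= hrank (hfst b) + r2 (hsnd a).
Proof.
case: a => [[w|]|]; case: b => [[w'|]|] //=; rewrite ?(rank_z2 z2min).
- by rewrite rleE /= => /and3P[_ _ H] _; nat_lia.
- by have := reesP w'; rewrite /= => H _ _; nat_lia.
- by [].
Qed.

Lemma rank_hsnd_lt b : b != hbot -> b != htop -> r2 (hsnd b) < hrank (hfst b).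
Proof. by case: b => [[w|]|] //= _ _; have := reesP w; rewrite /=; nat_lia. Qed.


Fixpoint snd_chain (a : Q) (s : seq Q) : seq P2 :=
  if s is v :: s' then
    (if (hsnd a < hsnd v)%O then hsnd v :: snd_chain v s' else snd_chain v s')
  else [::].

(* Rebuilds a sequence of second coordinates from its starting point k, the
   positions where it moves (true) and the successive values it moves to. *)
Fixpoint interleave (k : P2) (bs : seq bool) (c : seq P2) : seq P2 :=
  match bs with
  | [::] => [::]
  | b :: bs' =>
      if b then (if c is c0 :: c' then c0 :: interleave c0 bs' c' else [::])
      else k :: interleave k bs' c
  end.

Lemma snd_chain_count a s :
  count isSome (pairmap snd_lab a s) = size (snd_chain a s).
Proof.
elim: s a => [|v s IH] a //=; rewrite [snd_lab a v]/snd_lab.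
by case: ifP => _ /=; rewrite IH.
Qed.

Lemma covQ_hsnd u v : covQ u v -> v != htop ->
  if (hsnd u < hsnd v)%O then cov2 (hsnd u) (hsnd v) else hsnd u == hsnd v.
Proof.
move=> /coversQ[_ H] /H [E|c]; first by rewrite E ltxx eqxx.
by have [lt _] := (coversP _ _).1 c; rewrite lt.
Qed.

Lemma snd_chain_path a s : path covQ a s -> last a s != htop ->
  satchain le2 (hsnd a) (hsnd (last a s)) (snd_chain a s).
Proof.
rewrite /satchain; elim: s a => [|v s IH] a /=; first by rewrite eqxx.
move=> /andP[c p] l.
have vt : v != htop by apply/eqP => E; move: p l; rewrite E => /path_from_top->.
by have := covQ_hsnd c vt; case: ifP => _ /=; [move=> -> | move=> /eqP->]; apply: IH.
Qed.

Lemma snd_chain_lab a s : path covQ a s ->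
  pmap id (pairmap snd_lab a s) = labseq lam2 (hsnd a) (snd_chain a s).
Proof.
elim: s a => [|v s IH] a //= /andP[c p].
have [E|vt] := eqVneq v htop.
  by subst v; move: p => /path_from_top->; rewrite snd_lab_top /= lt_z2.
have := covQ_hsnd c vt; rewrite [snd_lab a v]/snd_lab.
by case: ifP => _ /=; [move=> _ | move=> /eqP->]; rewrite IH.
Qed.

Lemma chain_reconstruction a s : path covQ a s ->
  s = map (fun p => hpair p.1 p.2) (zip (map hfst s)
      (interleave (hsnd a) (map isSome (pairmap snd_lab a s)) (snd_chain a s))).
Proof.
elim: s a => [|v s IH] a //= /andP[c p].
have [E|vt] := eqVneq v htop.
  by subst v; move: p => /path_from_top->; rewrite snd_lab_top.
have := covQ_hsnd c vt; rewrite [snd_lab a v]/snd_lab.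
by case: ifP => _ /= => [_|/eqP ->]; rewrite hpairK -IH.
Qed.

Lemma chain_determined a s s' : path covQ a s -> path covQ a s' ->
  map hfst s = map hfst s' -> pairmap snd_lab a s = pairmap snd_lab a s' ->
  snd_chain a s = snd_chain a s' -> s = s'.
Proof.
move=> p p' E1 E2 E3.
by rewrite (chain_reconstruction p) (chain_reconstruction p') E1 E2 E3.
Qed.

Lemma lift_flat (c : seq H1) (u : Q) : u != htop -> path cov1 (hfst u) c ->
  exists s, [/\ path covQ u s, map hfst s = c,
                pairmap snd_lab u s = nseq (size c) None &
                (last u s != htop -> hsnd (last u s) = hsnd u)].
Proof.
elim: c u => [|x c IH] u ut /=; first by move=> _; exists [::].
move=> /andP[cx pc].
case: x cx pc => [[p|]|] cx pc; last by move: cx; case: (hfst u) => [[?|]|].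
- have Hw : r2 (hsnd u) <= r1 p.
    case: u ut cx => [[w|]|] //= _; last by rewrite (rank_z2 z2min).
    rewrite covers_hin => /(rank_cover sp1) ->.
    by have := reesP w; rewrite /=; nat_lia.
  have [s [ps fs ss ls]] := IH (hin (mkR Hw)) isT pc.
  exists (hin (mkR Hw) :: s); split => /=.
  + by rewrite ps andbT; apply/coversQ; split => //= _; left.
  + by rewrite fs.
  + by rewrite ss /snd_lab /= ltxx.
  + by move=> /ls ->.
- move: pc => /path_from_top ->.
  exists [:: htop]; split => //=.
  + by rewrite andbT; apply/coversQ.
  + by rewrite snd_lab_top.
Qed.

Lemma lift_climb (c : seq H1) (d : seq P2) (w : R) :
  path cov1 (hin (val w).1) c -> path cov2 (val w).2 d -> size c = size d ->
  htop \notin c ->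
  exists s, [/\ path covQ (hin w) s, map hfst s = c, map hsnd s = d &
     pairmap snd_lab (hin w) s = map Some (labseq lam2 (val w).2 d)].
Proof.
elim: c d w => [|x c IH] d w; first by case: d => // _ _ _ _; exists [::].
case: d => [//|q d] /= /andP[cx pc] /andP[cq pd] [Sz].
rewrite inE negb_or => /andP[xt nt].
case: x cx pc xt => [[p|]|] cx pc xt //.
have Hw : r2 q <= r1 p.
  move: cx; rewrite covers_hin => /(rank_cover sp1) ->.
  by rewrite (rank_cover sp2 cq); have := reesP w; rewrite /=; nat_lia.
have [s [ps fs gs ss]] := IH d (mkR Hw) pc pd Sz nt.
exists (hin (mkR Hw) :: s); split => /=.
- by rewrite ps andbT; apply/coversQ; split => //= _; right.
- by rewrite fs.
- by rewrite gs.
- by rewrite ss /snd_lab /= (proj1 ((coversP _ _).1 cq)).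
Qed.

Lemma last_snd_lab_top a s : path covQ a s -> last a s = htop -> s != [::] ->
  last None (pairmap snd_lab a s) = None.
Proof.
elim: s a => [|v s IH] a //= /andP[c p] l _.
case: s IH p l => [|v' s] IH p l /=; first by move: l => /= ->; rewrite snd_lab_top.
by have := IH v p l isT.
Qed.


(* A fixed interval [a, b] of Q, with the increasing lambda1-chain c1 of the
   first coordinates and the chain C of P2 that the second coordinate follows
   in the increasing chain (empty when b is the top). *)
Section Interval.
Variables (a b : Q).
Hypothesis ab : ltr qle a b.
Local Notation k := (hsnd a).
Local Notation l := (hsnd b).
Variable c1 : seq H1.
Hypotheses (sc1 : satchain hle1 (hfst a) (hfst b) c1)
  (so1 : sorted <=%O (labseq lam1 (hfst a) c1))
  (un1 : forall s, satchain hle1 (hfst a) (hfst b) s ->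
           sorted <=%O (labseq lam1 (hfst a) s) -> s = c1)
  (lx1 : forall s, satchain hle1 (hfst a) (hfst b) s -> s <> c1 ->
           lexlt <=%O (labseq lam1 (hfst a) c1) (labseq lam1 (hfst a) s)).
Variable C : seq P2.
Hypotheses (sC : sorted <=%O (labseq lam2 k C))
  (topC : b = htop -> C = [::])
  (satC : b != htop -> satchain le2 k l C)
  (unC : b != htop -> forall t, satchain le2 k l t ->
     (sorted <=%O (labseq lam2 k t) -> t = C) /\
     (t = C \/ lexlt <=%O (labseq lam2 k C) (labseq lam2 k t))).

Lemma a_not_top : a != htop.
Proof. by apply/eqP => E; move: ab; rewrite E; case: b => [[?|]|]. Qed.

Lemma satchain_nonnil s : satchain qle a b s -> s != [::].
Proof. by case: s => // /andP[_ /eqP /= E]; move: ab; rewrite E /ltr eqxx. Qed.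

Lemma satchain_size s : satchain qle a b s -> b != htop ->
  size s = hrank (hfst b) - hrank (hfst a).
Proof.
move=> /andP[ps /eqP ls] bt.
have := hrank_path (hfst_path ps); rewrite last_map ls size_map hfst_top.
by move=> /(_ bt); nat_lia.
Qed.

Lemma increasing_shape s : satchain qle a b s -> sorted ple (labseq lab a s) ->
  [/\ map hfst s = c1, snd_chain a s = C &
      pairmap snd_lab a s = nseq (size c1 - size C) None ++ map Some (labseq lam2 k C)].
Proof.
move=> cs so; have sne := satchain_nonnil cs; move: cs => /andP[ps /eqP ls].
move: so; rewrite (labseqE ps) sorted_zip ?size_pairmap ?size_map //.
move=> /andP[soa sob].
have fs : map hfst s = c1.
  by apply: un1 => //; rewrite /satchain hfst_path //= last_map ls eqxx.
have [j [gm Eb]] := sorted_optP sob.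
have Egm : gm = labseq lam2 k (snd_chain a s).
  by rewrite -(snd_chain_lab ps) Eb pmap_nsome.
have cC : snd_chain a s = C.
  have [bt|bnt] := eqVneq b htop.
    have := last_snd_lab_top ps (etrans ls bt) sne; rewrite Eb => Hl.
    have g0 : gm = [::].
      case/lastP: gm {Eb Egm} Hl => // g' v.
      by rewrite map_rcons last_cat last_rcons.
    rewrite topC //; have := congr1 size Egm; rewrite g0 /labseq size_pairmap.
    by case: (snd_chain a s).
  have sgm : sorted <=%O gm.
    by move: sob; rewrite Eb => /cat_sorted2 [_]; rewrite sorted_map.
  have := snd_chain_path ps; rewrite ls => /(_ bnt) sc.
  by apply: (unC bnt sc).1; rewrite -Egm.
split => //; rewrite Eb -cC -Egm.
have := congr1 size Eb; rewrite size_pairmap size_cat size_nseq size_map -fs size_map.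
by move=> ->; congr (nseq _ _ ++ _); rewrite Egm /labseq size_pairmap addnK.
Qed.

Lemma increasing_unique s s' :
  satchain qle a b s -> sorted ple (labseq lab a s) ->
  satchain qle a b s' -> sorted ple (labseq lab a s') -> s = s'.
Proof.
move=> cs ss cs' ss'.
have [F1 C1 B1] := increasing_shape cs ss.
have [F2 C2 B2] := increasing_shape cs' ss'.
apply: (chain_determined (proj1 (andP cs)) (proj1 (andP cs'))).
- by rewrite F1 F2.
- by rewrite B1 B2.
- by rewrite C1 C2.
Qed.

(* If b is the top, lift c1 keeping the second coordinate fixed. *)
Lemma increasing_exists_top : b = htop ->
  exists s, satchain qle a b s /\ sorted ple (labseq lab a s).
Proof.
move=> bt; have /andP[pc1 /eqP lc1] := sc1.
have [s [ps fs ss _]] := lift_flat a_not_top pc1.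
have lsb : last a s = b.
  by apply/eqP; rewrite bt -hfst_top -last_map fs lc1 bt.
exists s; split; first by rewrite /satchain ps lsb eqxx.
rewrite (labseqE ps) sorted_zip ?size_pairmap ?size_map // fs so1 ss /=.
by have := sorted_nseq_some (size c1) (g := [::] : seq L2) isT; rewrite cats0.
Qed.

(* Below the top, the ranks leave room for the second coordinate to stay
   fixed for size c1 - size C >= 0 steps, at least one if a is the bottom. *)
Lemma climb_sizes : b != htop ->
  size C <= size c1 /\ (a = hbot -> size C < size c1).
Proof.
move=> bt; have /andP[pc1 /eqP lc1] := sc1.
have /andP[pC /eqP lC] := satC bt.
have rhn : hrank (hfst b) = hrank (hfst a) + size c1.
  by rewrite -lc1 hrank_path // lc1 hfst_top.
have r2m : r2 l = r2 k + size C by rewrite -lC rank_path.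
split; first by have := leQ_rank (andP ab).2 bt; nat_lia.
move=> E; have bnb : b != hbot.
  by apply/eqP => E'; move: ab; rewrite E E' /ltr eqxx.
have := rank_hsnd_lt bnb bt; move: rhn r2m; rewrite E /= (rank_z2 z2min).
by nat_lia.
Qed.

(* Below the top, lift the first size c1 - size C steps of c1 keeping the
   second coordinate fixed, then the remaining ones along C. *)
Lemma increasing_exists_below : b != htop ->
  exists s, satchain qle a b s /\ sorted ple (labseq lab a s).
Proof.
move=> bt; have /andP[pc1 /eqP lc1] := sc1; have /andP[pC /eqP lC] := satC bt.
have [Cc1 Cbot] := climb_sizes bt.
set j := size c1 - size C.
have notop : htop \notin hfst a :: c1.
  by apply: path_notop pc1 _; rewrite lc1 hfst_top.
have := pc1; rewrite -(cat_take_drop j c1) cat_path => /andP[pt pd].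
have [s1 [ps1 fs1 ss1 ls1]] := lift_flat a_not_top pt.
have fu1 : hfst (last a s1) = last (hfst a) (take j c1).
  by rewrite -(last_map hfst s1 a) fs1.
have u1nt : last a s1 != htop.
  apply/negP => /eqP E; move: notop; have := mem_last (hfst a) (take j c1).
  by rewrite -fu1 E /= !inE => /orP[->//|/mem_take ->]; rewrite orbT.
have u1nb : hfst (last a s1) != hbot.
  rewrite fu1; case: (posnP j) => [j0|jp].
    rewrite j0 take0 /=; apply/eqP => E; have Ea : a = hbot.
      by move: E; case: (a) => [[?|]|].
    by move: j0 (Cbot Ea); rewrite /j; nat_lia.
  have : last (hfst a) (take j c1) \in take j c1.
    have : size (take j c1) != 0 by rewrite size_takel ?leq_subr // -lt0n.
    by case: (take j c1) => //= x t _; rewrite mem_last.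
  by move/mem_take; apply: contraL => /eqP ->; exact: path_nobot pc1.
have [w1 Ew1] : exists w1, last a s1 = hin w1.
  by move: u1nt u1nb; case: (last a s1) => [[w|]|] //; exists w.
have fw1 : hin (val w1).1 = last (hfst a) (take j c1) by rewrite -fu1 Ew1.
have gw1 : (val w1).2 = k by rewrite -(ls1 u1nt) Ew1.
have [s2 [ps2 fs2 gs2 ss2]] := lift_climb (c := drop j c1) (d := C) (w := w1)
   ltac:(by rewrite fw1) ltac:(by rewrite gw1)
   ltac:(by rewrite size_drop /j; nat_lia)
   ltac:(by apply: contra notop => /mem_drop Hd; rewrite inE Hd orbT).
have ps : path covQ a (s1 ++ s2) by rewrite cat_path ps1 Ew1 ps2.
have lsb : last a (s1 ++ s2) = b.
  rewrite last_cat Ew1 -(hpairK (last (hin w1) s2)) -(hpairK b).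
  rewrite -(last_map hfst s2 (hin w1)) -(last_map hsnd s2 (hin w1)) fs2 gs2 /=.
  by rewrite fw1 -last_cat cat_take_drop lc1 gw1 lC.
exists (s1 ++ s2); split; first by rewrite /satchain ps lsb eqxx.
rewrite (labseqE ps) sorted_zip ?size_pairmap ?size_map // map_cat fs1 fs2.
rewrite cat_take_drop so1 /= pairmap_cat ss1 Ew1 ss2 gw1.
exact: sorted_nseq_some.
Qed.

(* The increasing chain is lexicographically first: compare first components
   through lambda1 and second components through lambda2 ([lex_zip]). *)
Lemma increasing_lexfirst s s' :
  satchain qle a b s -> sorted ple (labseq lab a s) ->
  satchain qle a b s' -> s' <> s -> lexlt ple (labseq lab a s) (labseq lab a s').
Proof.
move=> cs ss cs' ne; have [ps /eqP ls] := andP cs; have [ps' /eqP ls'] := andP cs'.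
have [fs cC eb] := increasing_shape cs ss.
have sc1' : satchain hle1 (hfst a) (hfst b) (map hfst s').
  by rewrite /satchain hfst_path //= last_map ls' eqxx.
have lex1 : labseq lam1 (hfst a) c1 = labseq lam1 (hfst a) (map hfst s') \/
            lexlt <=%O (labseq lam1 (hfst a) c1) (labseq lam1 (hfst a) (map hfst s')).
  have [->|ne'] := eqVneq (map hfst s') c1; first by left.
  by right; apply: lx1 => //; apply/eqP.
have lex2 : lexle_common (@opt_le _ L2)
    (nseq (size c1 - size C) None ++ map Some (labseq lam2 k C)) (pairmap snd_lab a s').
  have [bt|bt] := eqVneq b htop; first by rewrite topC //= cats0; apply: lexle_nones.
  have := snd_chain_path ps'; rewrite ls' => /(_ bt) sc'.
  apply: lexle_sorted_opt.
  - by rewrite -eb !size_pairmap (satchain_size cs bt) (satchain_size cs' bt).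
  - rewrite snd_chain_count /labseq size_pairmap.
    have /andP[pC /eqP lC] := satC bt; have /andP[pc' /eqP lc'] := sc'.
    by apply/eqP; rewrite -(eqn_add2l (r2 k)) -!rank_path // lC lc'.
  - by rewrite (snd_chain_lab ps'); case: (unC bt sc').2 => [->|]; [left | right].
rewrite (labseqE ps) (labseqE ps') fs eb.
have := lex_zip (@le_refl _ L1) (@opt_le_refl _ L2) _ _ lex1 lex2.
case=> [||E|H]; last exact: H.
- by rewrite -eb /labseq !size_pairmap -fs size_map.
- by rewrite /labseq !size_pairmap size_map.
exfalso; apply: ne; apply: (increasing_unique cs' _ cs ss).
by rewrite (labseqE ps'); move: ss; rewrite (labseqE ps) fs eb E.
Qed.

End Interval.

Theorem rees_EL : EL_labeling hle1 <=%O lam1 -> semiEL_labeling le2 <=%O lam2 ->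
  EL_labeling qle ple lab.
Proof.
move=> EL1 EL2 a b ab.
have [c1 [sc1 so1 un1 lx1]] := EL1 _ _ (ltrQ_hfst ab).
have [C [sC topC satC unC]] : exists C : seq P2,
  [/\ sorted <=%O (labseq lam2 (hsnd a) C), b = htop -> C = [::],
      b != htop -> satchain le2 (hsnd a) (hsnd b) C &
      b != htop -> forall t, satchain le2 (hsnd a) (hsnd b) t ->
        (sorted <=%O (labseq lam2 (hsnd a) t) -> t = C) /\
        (t = C \/ lexlt <=%O (labseq lam2 (hsnd a) C) (labseq lam2 (hsnd a) t))].
  have [bt|bt] := eqVneq b htop; first by exists [::]; split; rewrite ?bt.
  have [C [satC sC unC]] := semiEL_chain sp2 EL2 (leQ_hsnd (andP ab).2 bt).
  by exists C; split => // E; move: bt; rewrite E eqxx.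
have [s [cs ss]] : exists s, satchain qle a b s /\ sorted ple (labseq lab a s).
  have [bt|bt] := eqVneq b htop.
    exact: (increasing_exists_top ab sc1 so1 bt).
  exact: (increasing_exists_below ab sc1 so1 sC satC bt).
exists s; split => // [s' cs' ss'|s' cs' ne].
  exact: (increasing_unique ab un1 topC unC cs' ss' cs ss).
exact: (increasing_lexfirst ab un1 lx1 topC satC unC cs ss cs' ne).
Qed.

End ReesHat.

Theorem theorem2p3 (d1 d2 e1 e2 : Order.disp_t)
  (P1 : finPOrderType d1) (P2 : finPOrderType d2)
  (L1 : porderType e1) (L2 : porderType e2)
  (z2 : P2) (lam1 : hat P1 -> hat P1 -> L1) (lam2 : P2 -> P2 -> L2) :
  semipure (<=%O : rel P1) ->
  semipure (<=%O : rel P2) ->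
  height (<=%O : rel P1) = height (<=%O : rel P2) ->
  (forall q : P2, (z2 <= q)%O) ->
  EL_labeling (hat_le (<=%O : rel P1)) (<=%O : rel L1) lam1 ->
  semiEL_labeling (<=%O : rel P2) (<=%O : rel L2) lam2 ->
  EL_labeling (hat_le (@rees_le _ _ P1 P2)) (@prod_lab_le _ _ L1 L2)
    (rees_label z2 lam1 lam2).
Proof.
move=> sp1 sp2 heights z2min EL1 EL2.
have [p0 _] : exists p0 : P1, true.
  by apply: height_nonempty; rewrite heights; apply: height_gt0 z2.
exact: (rees_EL sp1 sp2 z2min p0 EL1 EL2).
Qed.
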